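(* Let $p\ge3$ be odd and $\Gamma(v,x)=x^p-pxv^{p-1}+(p-1)v^p$ for $v\in[0,1]$, $x\in[-1,1]$. If $x,y,z\in[-1,1]$ are such that the matrix $\begin{pmatrix}x&z\\ z&y\end{pmatrix}$ is positive semi-definite, then for every $v\in[0,1]$, $$\Gamma(v,x)+\Gamma(v,y)+2\Gamma(v,z)\ge0.$$ *)

From Stdlib Require Import Reals.
Open Scope R_scope.

Definition Gamma (p : nat) (v x : R) : R :=
  x ^ p - INR p * x * v ^ (p - 1) + (INR p - 1) * v ^ p.

(* The symmetric matrix [[x, z], [z, y]] is positive semi-definite:
   (a b) M (a b)^T >= 0 for all real a, b. *)
Definition psd2 (x y z : R) : Prop :=
  forall a b : R, a * (x * a + z * b) + b * (z * a + y * b) >= 0.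

(* Write q = p - 1.  For nonnegative arguments [Gamma] is nonnegative (weighted AM-GM,
   proved by induction on p).  Positive semi-definiteness gives x, y >= 0 and
   x + y + 2z >= 0, so only z = -t < 0 needs care; for odd p,
   Gamma(v,-t) = 2q v^p - Gamma(v,t).  If t <= v this is already >= q v^p.
   If t > v, the difference x |-> Gamma(v,x) - Gamma(t,x) is affine and nondecreasing,
   so with (x + y)/2 >= t and Gamma(t,.) >= 0 on [0,oo) we get
   Gamma(v,x) + Gamma(v,y) >= 2 (Gamma(v,t) - Gamma(t,t)) = 2 Gamma(v,t). *)

From Stdlib Require Import Reals Arith Lra Lia.
Open Scope R_scope.

Lemma Gamma_succ (n : nat) (v x : R) :
  Gamma (S n) v x = x ^ S n - INR (S n) * x * v ^ n + INR n * v ^ S n.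
Proof.
  unfold Gamma. replace (S n - 1)%nat with n by lia.
  rewrite S_INR. ring.
Qed.

Lemma Gamma_nonneg (p : nat) (v x : R) : 0 <= v -> 0 <= x -> 0 <= Gamma p v x.
Proof.
  intros hv hx. destruct p as [|n].
  - unfold Gamma. simpl. lra.
  - rewrite Gamma_succ. induction n as [|n IH].
    + simpl. lra.
    + assert (step : x ^ S (S n) - INR (S (S n)) * x * v ^ S n + INR (S n) * v ^ S (S n)
                     = x * (x ^ S n - INR (S n) * x * v ^ n + INR n * v ^ S n)
                       + INR (S n) * v ^ n * (x - v) ^ 2).
      { rewrite !S_INR. simpl. ring. }
      rewrite step.
      apply Rplus_le_le_0_compat.
      * apply Rmult_le_pos; assumption.
      * apply Rmult_le_pos; [apply Rmult_le_pos; [apply pos_INR | apply pow_le; lra]|].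
        apply pow2_ge_0.
Qed.

Lemma Gamma_diag (p : nat) (t : R) : Gamma p t t = 0.
Proof.
  destruct p as [|n].
  - unfold Gamma. simpl. ring.
  - rewrite Gamma_succ, S_INR. simpl. ring.
Qed.

Lemma pow_opp_odd (p : nat) (t : R) : Nat.Odd p -> (- t) ^ p = - t ^ p.
Proof.
  intros [k ->].
  replace (- t) with (-1 * t) by ring.
  rewrite Rpow_mult_distr, Nat.add_1_r, pow_1_odd. ring.
Qed.

Lemma Gamma_opp_odd (p : nat) (v t : R) :
  Nat.Odd p -> Gamma p v (- t) = 2 * (INR p - 1) * v ^ p - Gamma p v t.
Proof. intros hodd. unfold Gamma. rewrite pow_opp_odd by exact hodd. ring. Qed.

Lemma Gamma_le_of_le (p : nat) (v t : R) : (1 <= p)%nat -> 0 <= t <= v ->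
  Gamma p v t <= (INR p - 1) * v ^ p.
Proof.
  intros hp ht. destruct p as [|n]; [lia|]. rewrite Gamma_succ.
  replace (INR (S n) - 1) with (INR n) by (rewrite S_INR; ring).
  assert (hpow : t ^ n <= v ^ n) by (apply pow_incr; exact ht).
  assert (hv : 0 <= v ^ n) by (apply pow_le; lra).
  assert (hn : 0 <= INR n) by apply pos_INR.
  assert (t * t ^ n <= t * v ^ n) by (apply Rmult_le_compat_l; lra).
  assert (0 <= INR n * (t * v ^ n)) by (apply Rmult_le_pos; [|apply Rmult_le_pos]; lra).
  rewrite S_INR. simpl. lra.
Qed.

Lemma Gamma_sub_midpoint (p : nat) (v t x y : R) : 0 <= v <= t -> 2 * t <= x + y ->
  2 * (Gamma p v t - Gamma p t t)
  <= (Gamma p v x - Gamma p t x) + (Gamma p v y - Gamma p t y).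
Proof.
  intros hvt hxy.
  assert (hslope : 0 <= INR p * (t ^ (p - 1) - v ^ (p - 1))).
  { apply Rmult_le_pos; [apply pos_INR|].
    assert (v ^ (p - 1) <= t ^ (p - 1)) by (apply pow_incr; exact hvt). lra. }
  assert (hdiff : (Gamma p v x - Gamma p t x) + (Gamma p v y - Gamma p t y)
                  - 2 * (Gamma p v t - Gamma p t t)
                  = INR p * (t ^ (p - 1) - v ^ (p - 1)) * (x + y - 2 * t))
    by (unfold Gamma; ring).
  assert (0 <= INR p * (t ^ (p - 1) - v ^ (p - 1)) * (x + y - 2 * t))
    by (apply Rmult_le_pos; lra).
  lra.
Qed.

Lemma psd2_diag_nonneg (x y z : R) : psd2 x y z -> 0 <= x /\ 0 <= y.
Proof. intros h. split; [specialize (h 1 0) | specialize (h 0 1)]; lra. Qed.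

Lemma psd2_sum_nonneg (x y z : R) : psd2 x y z -> 0 <= x + y + 2 * z.
Proof. intros h. specialize (h 1 1). lra. Qed.

Theorem mainTheorem16 (p : nat) (hp3 : (3 <= p)%nat) (hodd : Nat.Odd p)
  (x y z : R)
  (hx : -1 <= x <= 1) (hy : -1 <= y <= 1) (hz : -1 <= z <= 1)
  (hpsd : psd2 x y z) :
  forall v : R, 0 <= v <= 1 ->
    Gamma p v x + Gamma p v y + 2 * Gamma p v z >= 0.
Proof.
  intros v hv.
  destruct (psd2_diag_nonneg x y z hpsd) as [x0 y0].
  pose proof (psd2_sum_nonneg x y z hpsd) as hsum.
  pose proof (Gamma_nonneg p v x (proj1 hv) x0) as Gx.
  pose proof (Gamma_nonneg p v y (proj1 hv) y0) as Gy.
  assert (hvp : 0 <= (INR p - 1) * v ^ p).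
  { apply Rmult_le_pos; [|apply pow_le; lra].
    assert (1 <= INR p) by (apply (le_INR 1); lia). lra. }
  destruct (Rle_or_lt 0 z) as [z0 | z0].
  - pose proof (Gamma_nonneg p v z (proj1 hv) z0). lra.
  - replace z with (- (- z)) by ring.
    rewrite (Gamma_opp_odd p v (- z) hodd).
    destruct (Rle_or_lt (- z) v) as [tv | vt].
    + pose proof (Gamma_le_of_le p v (- z) ltac:(lia) ltac:(lra)). lra.
    + pose proof (Gamma_sub_midpoint p v (- z) x y ltac:(lra) ltac:(lra)) as hmid.
      rewrite Gamma_diag in hmid.
      pose proof (Gamma_nonneg p (- z) x ltac:(lra) x0).
      pose proof (Gamma_nonneg p (- z) y ltac:(lra) y0).
      lra.
Qed.
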